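(* Let $k\ge 2$, $w=2^k-1$, $v=2^{k-1}$. For $j\ge 1$ let $\tilde U_j$ be the sequence of $2^j-1$ jumps of length $1$ followed by one jump of length $2^j+2^{j-1}-1$, and let $\tilde U_j^R$ be its reverse. Let $$\tilde H = 2w+v,\ \tilde U_{k-1},\tilde U_{k-2},\dots,\tilde U_2,\ 1,\ 2w,\ \tilde U_1^R,\tilde U_2^R,\dots,\tilde U_{k-1}^R,\ v+1.$$ Consider a line of $3w+2$ cells indexed $0,\dots,3w+1$ in which cells $w,\dots,2w-1$ are blocked, the frog stands on cell $3w$, and all other cells are empty, except that one cell $p$ with even index $p\in\{0,2,\dots,w-1\}$ may be either empty or already visited. Then for every such even $p$ there is a valid execution of $\tilde H$ which never lands on cell $p$, visits every other empty cell exactly once, and ends with the frog on cell $3w+1$.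
   Context: A frog on a line of cells performs a given sequence of positive jump lengths; for each jump it chooses a direction, moving from position $q$ to $q+J$ or $q-J$. An execution is valid if every landing cell lies on the line, is not blocked, and has not been visited before (the starting cell and any cell marked as already visited count as visited). Cells are indexed from $0$. *)

From mathcomp Require Import all_boot all_order all_algebra.
Set Implicit Arguments. Unset Strict Implicit. Unset Printing Implicit Defensive.
Import Order.TTheory GRing.Theory Num.Theory.
Local Open Scope ring_scope.

Definition Ut (j : nat) : seq nat :=
  (nseq (2 ^ j - 1) 1%N ++ [:: (2 ^ j + 2 ^ j.-1 - 1)%N])%N.

Definition Ht (k : nat) : seq nat :=
  let w := (2 ^ k - 1)%N in
  let v := (2 ^ k.-1)%N in
  [:: (2 * w + v)%N]
  ++ flatten [seq Ut j | j <- rev (iota 2 (k - 2))]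
  ++ [:: 1%N; (2 * w)%N]
  ++ flatten [seq rev (Ut j) | j <- iota 1 (k - 1)]
  ++ [:: (v + 1)%N].

Fixpoint landings (q : int) (js : seq nat) (ds : seq bool) : seq int :=
  match js, ds with
  | j :: js', d :: ds' =>
      let q' := if d then q + j%:Z else q - j%:Z in q' :: landings q' js' ds'
  | _, _ => [::]
  end.

(* An execution (choice of directions ds for the jump sequence js, from start
   cell q) is valid on a line of L cells with blocked predicate blocked and
   initially visited cells vis0 (which include the start cell): every landing
   cell lies on the line, is not blocked, and has not been visited before. *)
Definition valid_exec (L : nat) (blocked : pred int) (vis0 : seq int)
    (q : int) (js : seq nat) (ds : seq bool) : Prop :=
  size ds = size js /\
  let ls := landings q js ds in
  (forall c, c \in ls -> (0 <= c) && (c < L%:Z)) /\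
  (forall c, c \in ls -> ~~ blocked c) /\
  (forall c, c \in ls -> c \notin vis0) /\
  uniq ls.

From mathcomp Require Import all_boot all_order all_algebra zify.
Import Order.TTheory GRing.Theory Num.Theory.
Set Implicit Arguments. Unset Strict Implicit.
Local Open Scope ring_scope.

(* Let U_n, ..., U_1 be started at the midpoint of an interval of 2^(n+1) - 1
   cells. It can visit every cell of the interval exactly once and end at any
   even offset: the 2^n - 1 unit jumps of U_n sweep one half of the interval
   and its long jump lands at the midpoint of the other half, where induction
   applies. The jump 2w + v brings the frog to the midpoint of the left block
   [0, w); there H runs such a tour towards p but omits the final jump 2 of
   U_1 = [1; 2], so it ends at the even cell p +- 2 without touching p. The
   jump 2w then reaches the endpoint of a second tour of the right block
   [2w, 3w), which H walks backwards to its midpoint, and the jump v + 1 ends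
   at 3w + 1. *)

Definition step (q : int) (j : nat) (d : bool) : int :=
  if d then q + j%:Z else q - j%:Z.

Lemma landings_cons q j js d ds :
  landings q (j :: js) (d :: ds) = step q j d :: landings (step q j d) js ds.
Proof. by []. Qed.

Lemma landings_cat q js1 js2 ds1 ds2 : size ds1 = size js1 ->
  landings q (js1 ++ js2) (ds1 ++ ds2) =
  landings q js1 ds1 ++ landings (last q (landings q js1 ds1)) js2 ds2.
Proof. by elim: js1 q ds1 => [|j js IH] q [|d ds] //= [/IH ->]. Qed.

Lemma landings_rcons q js ds j d : size ds = size js ->
  landings q (rcons js j) (rcons ds d) =
  rcons (landings q js ds) (step (last q (landings q js ds)) j d).
Proof. by move=> Hs; rewrite -!cats1 landings_cat. Qed.

Lemma landings_rev q js ds : size ds = size js ->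
  let ls := landings q js ds in
  last q ls :: landings (last q ls) (rev js) (rev (map negb ds)) = rev (q :: ls).
Proof.
elim: js q ds => [|j js IH] q [|d ds] // [Hs].
rewrite landings_cons map_cons !rev_cons; set x := step q j d.
have Hx := IH x ds Hs; rewrite /= in Hx *.
rewrite landings_rcons ?size_rev ?size_map // -rcons_cons Hx [in RHS]rev_cons.
congr rcons.
have /(congr1 (last q)) := Hx; rewrite /= rev_cons last_rcons => ->.
by rewrite /x /step; case: (d) => /=; lia.
Qed.

Lemma last_landings_rev q js ds : size ds = size js ->
  let ls := landings q js ds in
  last (last q ls) (landings (last q ls) (rev js) (rev (map negb ds))) = q.
Proof.
by move=> /(landings_rev q) /(congr1 (last 0)) /=; rewrite rev_cons last_rcons.
Qed.

Lemma landings_ones_last q m d :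
  last q (landings q (nseq m 1%N) (nseq m d)) = step q m d.
Proof.
elim: m q => [|m IH] q; first by rewrite /step; case: d => /=; lia.
by rewrite /= -/(step q 1 d) IH /step; case: (d) => /=; lia.
Qed.

Definition lists_interval (s : seq int) (lo hi : int) : Prop :=
  uniq s /\ forall z, (z \in s) = (lo <= z) && (z < hi).

Lemma lists_interval_seq1 q : lists_interval [:: q] q (q + 1).
Proof. by split=> // z; rewrite mem_seq1; lia. Qed.

Lemma lists_interval_cat s1 s2 lo mid hi : lo <= mid <= hi ->
  lists_interval s1 lo mid -> lists_interval s2 mid hi ->
  lists_interval (s1 ++ s2) lo hi.
Proof.
move=> Hmid [U1 M1] [U2 M2]; split=> [|z]; last by rewrite mem_cat M1 M2; lia.
by rewrite cat_uniq U1 U2 andbT; apply/hasPn => z; rewrite M1 M2; lia.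
Qed.

Lemma lists_interval_catC s1 s2 lo hi :
  lists_interval (s1 ++ s2) lo hi -> lists_interval (s2 ++ s1) lo hi.
Proof.
by case=> U M; split=> [|z]; [rewrite uniq_catC | rewrite mem_cat orbC -mem_cat].
Qed.

Lemma lists_interval_rev s lo hi :
  lists_interval s lo hi -> lists_interval (rev s) lo hi.
Proof. by case=> U M; split=> [|z]; rewrite ?rev_uniq // mem_rev. Qed.

Lemma lists_interval_rcons s x lo hi : lists_interval (rcons s x) lo hi ->
  uniq s /\ forall z, (z \in s) = [&& lo <= z, z < hi & z != x].
Proof.
case; rewrite rcons_uniq => /andP[x_notin U] M; split=> // z.
have := M z; rewrite mem_rcons in_cons.
by have [->|] := eqVneq z x; rewrite ?(negbTE x_notin) ?andbT ?andbF.
Qed.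

Lemma lists_interval_ones_right q m :
  lists_interval (q :: landings q (nseq m 1%N) (nseq m true)) q (q + m%:Z + 1).
Proof.
elim: m q => [|m IH] q; first by rewrite addr0; exact: lists_interval_seq1.
rewrite -cat1s; apply: (lists_interval_cat _ (lists_interval_seq1 q)); first lia.
have -> : q + m.+1%:Z + 1 = q + 1 + m%:Z + 1 by lia.
exact: IH.
Qed.

Lemma lists_interval_ones_left q m :
  lists_interval (q :: landings q (nseq m 1%N) (nseq m false)) (q - m%:Z) (q + 1).
Proof.
elim: m q => [|m IH] q; first by rewrite subr0; exact: lists_interval_seq1.
rewrite -cat1s; apply: lists_interval_catC.
apply: (lists_interval_cat _ _ (lists_interval_seq1 q)); first lia.
have -> : q - m.+1%:Z = q - 1 - m%:Z by lia.
by have := IH (q - 1); rewrite subrK.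
Qed.

Definition Udown (n : nat) : seq nat := flatten [seq Ut j | j <- rev (iota 1 n)].

Lemma Udown_S n : Udown n.+1 = Ut n.+1 ++ Udown n.
Proof. by rewrite /Udown -(addn1 n) iotaD rev_cat /= add1n addn1. Qed.

Lemma Udown_S_rcons n :
  Udown n.+1 = rcons (flatten [seq Ut j | j <- rev (iota 2 n)] ++ [:: 1%N]) 2%N.
Proof. by rewrite /Udown /= rev_cons map_rcons flatten_rcons -cats1 -catA. Qed.

Lemma rev_Udown n : rev (Udown n) = flatten [seq rev (Ut j) | j <- iota 1 n].
Proof. by rewrite /Udown rev_flatten -map_comp -map_rev revK. Qed.

Lemma Udown_tour n (b : int) (p : nat) : ~~ odd p -> (p < 2 ^ n.+1 - 1)%N ->
  exists2 ds, size ds = size (Udown n) &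
    let c := b + (2 ^ n - 1)%N%:Z in let ls := landings c (Udown n) ds in
    lists_interval (c :: ls) b (b + (2 ^ n.+1 - 1)%N%:Z) /\ last c ls = b + p%:Z.
Proof.
elim: n b p => [|n IH] b p p_even p_lt.
  rewrite expn1 in p_lt; have -> : p = 0%N by lia.
  exists [::] => //=; rewrite expn1 expn0 subnn addr0; split=> //.
  exact: lists_interval_seq1.
have h_gt0 : (0 < 2 ^ n)%N by rewrite expn_gt0.
rewrite Udown_S /Ut !expnS in p_lt IH *; set h := (2 ^ n)%N in h_gt0 p_lt IH *.
set c := b + (2 * h - 1)%N%:Z.
have [p_lo | p_hi] := ltnP p (2 * h - 1).
- have [ds Hs [tour ends]] := IH b p p_even p_lo.
  exists (nseq (2 * h - 1) true ++ false :: ds).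
    by rewrite -catA !size_cat /= Hs !size_nseq.
  rewrite -catA landings_cat ?size_nseq // landings_ones_last landings_cons.
  have -> : step (step c (2 * h - 1) true) (2 * h + h - 1) false = b + (h - 1)%N%:Z.
    by rewrite /step /c; lia.
  split; last by rewrite last_cat.
  rewrite -cat_cons; apply: lists_interval_catC.
  apply: (lists_interval_cat _ tour); first lia.
  have -> : b + (2 * (2 * h) - 1)%N%:Z = c + (2 * h - 1)%N%:Z + 1 by rewrite /c; lia.
  exact: lists_interval_ones_right.
- have p_ne : p != (2 * h - 1)%N.
    by apply: contraNneq p_even => ->; rewrite oddB ?odd_mul //; lia.
  have p_even' : ~~ odd (p - 2 * h) by rewrite oddB ?odd_mul ?addbF //; lia.
  have [ds Hs [tour ends]] := IH (b + (2 * h)%N%:Z) (p - 2 * h)%N p_even' ltac:(lia).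
  exists (nseq (2 * h - 1) false ++ true :: ds).
    by rewrite -catA !size_cat /= Hs !size_nseq.
  rewrite -catA landings_cat ?size_nseq // landings_ones_last landings_cons.
  have -> : step (step c (2 * h - 1) false) (2 * h + h - 1) true =
            b + (2 * h)%N%:Z + (h - 1)%N%:Z by rewrite /step /c; lia.
  split; last by rewrite last_cat /= ends; lia.
  have -> : b + (2 * (2 * h) - 1)%N%:Z = b + (2 * h)%N%:Z + (2 * h - 1)%N%:Z by lia.
  rewrite -cat_cons; apply: (lists_interval_cat _ _ tour); first lia.
  have -> : b + (2 * h)%N%:Z = c + 1 by rewrite /c; lia.
  have -> : b = c - (2 * h - 1)%N%:Z by rewrite /c; lia.
  exact: lists_interval_ones_left.
Qed.

Lemma Udown_tour_rcons n js (b : int) (p : nat) : Udown n.+1 = rcons js 2%N ->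
  ~~ odd p -> (p < 2 ^ n.+2 - 1)%N ->
  exists2 ds, size ds = size js &
    let c := b + (2 ^ n.+1 - 1)%N%:Z in let ls := landings c js ds in
    lists_interval (rcons (c :: ls) (b + p%:Z)) b (b + (2 ^ n.+2 - 1)%N%:Z) /\
    exists2 y : nat, last c ls = b + y%:Z & ~~ odd y && (y < 2 ^ n.+2 - 1)%N.
Proof.
move=> Ejs p_even p_lt; have [ds] := Udown_tour b p_even p_lt.
rewrite Ejs; case/lastP: ds => [|ds d]; first by rewrite size_rcons.
rewrite !size_rcons => -[Hs] /=; rewrite landings_rcons // last_rcons -rcons_cons.
set c := b + _; set y := last c _ => -[tour ends]; rewrite ends in tour.
exists ds => //; split=> //.
have y_in : y \in rcons (c :: landings c js ds) (b + p%:Z).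
  by rewrite mem_rcons in_cons mem_last orbT.
have := tour.2 y; rewrite y_in => /esym y_range.
move: ends; rewrite /step; case: d => ends.
- exists (p - 2)%N; first by rewrite -/y; lia.
  by rewrite oddB ?addbF ?p_even //=; lia.
- exists (p + 2)%N; first by rewrite -/y; lia.
  by rewrite oddD addbF p_even /=; lia.
Qed.

Lemma Ht_eq n : Ht n.+2 =
  (2 * (2 ^ n.+2 - 1) + 2 ^ n.+1)%N
    :: (flatten [seq Ut j | j <- rev (iota 2 n)] ++ [:: 1%N])
    ++ (2 * (2 ^ n.+2 - 1))%N :: rev (Udown n.+1) ++ [:: (2 ^ n.+1 + 1)%N].
Proof. by rewrite /Ht /= !subSS !subn0 rev_Udown -!catA. Qed.

Lemma Ht_tour n p : ~~ odd p -> (p < 2 ^ n.+2 - 1)%N ->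
  let w := (2 ^ n.+2 - 1)%N in
  exists2 ds, size ds = size (Ht n.+2) &
    let ls := landings (3 * w)%N%:Z (Ht n.+2) ds in
    [/\ uniq ls,
        forall z, (z \in ls) = [|| [&& 0 <= z, z < w%:Z & z != p%:Z],
                                   ((2 * w)%N%:Z <= z) && (z < (3 * w)%N%:Z)
                                 | z == (3 * w + 1)%N%:Z]
      & last (3 * w)%N%:Z ls = (3 * w + 1)%N%:Z].
Proof.
move=> p_even p_lt w.
have [ds1 Hs1 [tour1 [y ends1 /andP[y_even y_lt]]]] :=
  Udown_tour_rcons 0 (Udown_S_rcons n) p_even p_lt.
have [ds2 Hs2 [tour2 ends2]] := Udown_tour (2 * w)%N%:Z y_even y_lt.
move: tour1 ends1 tour2 ends2; rewrite !add0r -/w.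
set c1 := (2 ^ n.+1 - 1)%N%:Z; set ls1 := landings c1 _ ds1.
set c2 := _ + c1; set ls2 := landings c2 _ ds2 => tour1 ends1 tour2 ends2.
have [U1 M1] := lists_interval_rcons tour1.
have [U2 M2] := lists_interval_rev tour2.
exists (false :: ds1 ++ true :: rev (map negb ds2) ++ [:: true]).
  by rewrite Ht_eq /= !size_cat /= !size_cat !size_rev size_map Hs1 Hs2 !size_cat.
cbv zeta; have -> : landings (3 * w)%N%:Z (Ht n.+2)
    (false :: ds1 ++ true :: rev (map negb ds2) ++ [:: true]) =
    (c1 :: ls1) ++ rev (c2 :: ls2) ++ [:: (3 * w + 1)%N%:Z].
  rewrite Ht_eq landings_cons.
  have -> : step (3 * w)%N%:Z (2 * w + 2 ^ n.+1) false = c1.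
    by rewrite /step /c1 /w !expnS; lia.
  rewrite landings_cat // -/ls1 ends1 landings_cons.
  have -> : step y (2 * w) true = last c2 ls2 by rewrite ends2 /step; lia.
  rewrite landings_cat ?size_rev ?size_map // -[last c2 ls2 :: _]cat_cons /ls2.
  rewrite landings_rev // last_landings_rev // -/ls2 /=.
  by congr (_ :: _ ++ _ ++ [:: _]); rewrite /c2 /c1 /w !expnS; lia.
split; last by rewrite !last_cat.
- rewrite !cat_uniq U1 U2 /= andbT; apply/andP; split; last by rewrite M2; lia.
  by apply/hasPn => z; rewrite mem_cat M1 M2 mem_seq1; lia.
- by move=> z; rewrite !mem_cat M1 M2 mem_seq1; lia.
Qed.

Theorem mainTheorem9 (k : nat) (hk : (2 <= k)%N) (p : nat)
    (hp_even : ~~ odd p) (hp : (p < 2 ^ k - 1)%N) (p_visited : bool) :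
  let w := (2 ^ k - 1)%N in
  let L := (3 * w + 2)%N in
  let blocked := fun c : int => (w%:Z <= c) && (c <= (2 * w - 1)%N%:Z) in
  let start := (3 * w)%N%:Z in
  let vis0 := start :: (if p_visited then [:: p%:Z] else [::]) in
  exists ds : seq bool,
    valid_exec L blocked vis0 start (Ht k) ds /\
    let ls := landings start (Ht k) ds in
    p%:Z \notin ls /\
    (forall c : int, c \in ls <->
       [/\ 0 <= c, c < L%:Z, ~~ blocked c, c != start & c != p%:Z]) /\
    last start ls = (3 * w + 1)%N%:Z.
Proof.
move=> w L blocked start vis0; rewrite {}/L {}/blocked {}/vis0 {}/start {}/w.
case: k hk hp => [|[|n]] // _ hp.
have [ds size_ds [ls_uniq ls_mem ls_last]] := Ht_tour hp_even hp.
exists ds; split; [split=> //; split; [|split; [|split]] | split; [|split]] => //.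
- by move=> z; rewrite ls_mem; lia.
- by move=> z; rewrite ls_mem; lia.
- by move=> z; rewrite ls_mem; case: p_visited; rewrite !in_cons ?in_nil; lia.
- by rewrite ls_mem; lia.
- by move=> z; rewrite ls_mem; split=> [z_in | [*]]; [split|]; lia.
Qed.
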